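(* Let $n\ge 2$, $1\le t\le n-1$ and $0<\epsilon\le 1/2$. Consider the $\mathrm{Knapsack}$ instance with $n$ objects, $c_i=v_i=1$ for all $i\in V=[n]$ and capacity $C=2(1-\epsilon)$, with LP relaxation $K=\{x\in[0,1]^n: C-\sum_i x_i\ge 0\}$. Let $\alpha=C/(n+(t-1)(1-\epsilon))$ and define $y\in[0,1]^{\mathcal P_t(V)}$ by $y_\emptyset=1$, $y_{\{i\}}=\alpha$ for all $i\in V$, and $y_I=0$ whenever $|I|>1$. Then $y\in \mathrm{SA}^t(K)$, and $\sum_{i}v_iy_{\{i\}}=n\alpha$ while the optimal integral value is $1$.
   Context: Notation: $\mathcal P(U)$ is the power set of $U$ and $\mathcal P_t(U)$ the set of subsets of $U$ of size at most $t$. For a collection $\mathcal T$ of subsets of $V$ and a vector $y$ indexed by subsets of $V$, $M_{\mathcal T}(y)$ is the symmetric matrix with rows and columns indexed by $\mathcal T$ and $(I,J)$-entry $y_{I\cup J}$. For an affine function $g(x)=b+\sum_{j\in V}a_jx_j$, $g*y$ is the vector with $(g*y)_I=b\,y_I+\sum_{j\in V}a_j\,y_{I\cup\{j\}}$. The $t$-th Sherali-Adams lifted polytope of $K=\{x\in[0,1]^n: g_\ell(x)\ge0,\ \ell=1,\dots,m\}$ (with affine $g_\ell$) is $\mathrm{SA}^t(K)$, the set of $y\in[0,1]^{\mathcal P_t(V)}$ with $y_\emptyset=1$, $M_{\mathcal P(U)}(y)\succeq 0$ for every $U\subseteq V$ with $|U|\le t$, and $M_{\mathcal P(W)}(g_\ell*y)\succeq0$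 for every $\ell$ and every $W\subseteq V$ with $|W|\le t-1$. Here the only constraint is $g(x)=C-\sum_i x_i$. *)

From HB Require Import structures.
From mathcomp Require Import all_boot all_order all_algebra.
Set Implicit Arguments. Unset Strict Implicit. Unset Printing Implicit Defensive.
Import Order.TTheory GRing.Theory Num.Theory.
Local Open Scope ring_scope.

Definition psd (R : realFieldType) (n : nat) (A : {set {set 'I_n}})
    (M : {set 'I_n} -> {set 'I_n} -> R) : Prop :=
  (forall I J, I \in A -> J \in A -> M I J = M J I) /\
  (forall x : {set 'I_n} -> R,
      0 <= \sum_(I in A) \sum_(J in A) x I * M I J * x J).

Definition momentPSD (R : realFieldType) (n : nat) (y : {set 'I_n} -> R)
    (U : {set 'I_n}) : Prop :=
  psd (powerset U) (fun I J => y (I :|: J)).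

(* g * y for the affine function g(x) = b + sum_j a_j x_j *)
Definition gstar (R : realFieldType) (n : nat) (b : R) (a : 'I_n -> R)
    (y : {set 'I_n} -> R) : {set 'I_n} -> R :=
  fun I => b * y I + \sum_(j : 'I_n) a j * y (I :|: [set j]).

(* t-th Sherali-Adams lifted polytope of K = {x in [0,1]^n : g(x) >= 0}
   for a single affine constraint g(x) = b + sum_j a_j x_j.
   y is a function on all subsets of V; only its values on P_t(V) matter. *)
Definition SA (R : realFieldType) (n t : nat) (b : R) (a : 'I_n -> R)
    (y : {set 'I_n} -> R) : Prop :=
  [/\ (forall I : {set 'I_n}, (#|I| <= t)%N -> 0 <= y I <= 1),
      y set0 = 1,
      (forall U : {set 'I_n}, (#|U| <= t)%N -> momentPSD y U) &
      (forall W : {set 'I_n}, (#|W| <= t.-1)%N -> momentPSD (gstar b a y) W)].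

From HB Require Import structures.
From mathcomp Require Import all_boot all_order all_algebra.
From mathcomp Require Import ring lra.
Set Implicit Arguments. Unset Strict Implicit. Unset Printing Implicit Defensive.
Import Order.TTheory GRing.Theory Num.Theory.
Local Open Scope ring_scope.

(* The lifted point y is supported on sets of size at most one, and so is
   g * y. For such a vector m the moment matrix over P(U) only sees
   m(empty), the m{i} and zeros, and its quadratic form completes to
   (m(empty) - sum_i m{i}) x_0^2 + sum_i m{i} (x_0 + x_i)^2, which is
   nonnegative as soon as the m{i} are nonnegative and sum to at most
   m(empty). For y this asks |U| alpha <= 1, and for g * y, whose
   singleton entries are (C - 1) alpha, it asks
   |W| (C - 1) alpha <= C - n alpha = (t - 1)(1 - eps) alpha; both follow
   from |U| <= t < n and |W| <= t - 1. *)

Section SupportAtMostOne.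

Variables (R : realFieldType) (n : nat).
Implicit Types (m F : {set 'I_n} -> R) (U : {set 'I_n}).

Definition supp_le1 m := forall K : {set 'I_n}, (2 <= #|K|)%N -> m K = 0.

Lemma big_powerset_supp_le1 U F : supp_le1 F ->
  \sum_(I in powerset U) F I = F set0 + \sum_(i in U) F [set i].
Proof.
move=> F0; rewrite (bigD1 set0) /=; last by rewrite inE sub0set.
congr (_ + _); rewrite (bigID (fun I : {set 'I_n} => #|I| == 1%N)) /=.
rewrite [X in _ + X]big1 ?addr0; last first.
  move=> K /andP [/andP [_ K0] K1]; apply: F0.
  by rewrite ltnNge leq_eqVlt negb_or K1 ltnS leqn0 cards_eq0.
rewrite -[RHS]big_imset /=; last by move=> i j _ _ /set1_inj.
apply: eq_bigl => I; apply/idP/imsetP.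
  case/andP=> /andP [IU _] /cards1P [i Ii]; exists i => //.
  by move: IU; rewrite Ii powersetE sub1set.
case=> i iU ->; rewrite powersetE sub1set iU cards1 andbT.
by apply/eqP=> /setP /(_ i); rewrite !inE eqxx.
Qed.

Lemma supp_le1_setU m (I J : {set 'I_n}) :
  supp_le1 m -> (2 <= #|J|)%N -> m (I :|: J) = 0.
Proof.
move=> m0 J2; apply: m0; apply: leq_trans J2 _.
by rewrite subset_leq_card // subsetUr.
Qed.

Lemma moment_form_supp_le1 m U (x : {set 'I_n} -> R) : supp_le1 m ->
  \sum_(I in powerset U) \sum_(J in powerset U) x I * m (I :|: J) * x J =
  (m set0 - \sum_(i in U) m [set i]) * x set0 ^+ 2
  + \sum_(i in U) m [set i] * (x set0 + x [set i]) ^+ 2.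
Proof.
move=> m0.
have inner I : \sum_(J in powerset U) x I * m (I :|: J) * x J =
    x I * m I * x set0 + \sum_(j in U) x I * m (I :|: [set j]) * x [set j].
  rewrite big_powerset_supp_le1 ?setU0 // => J J2.
  by rewrite supp_le1_setU ?mulr0 ?mul0r.
under eq_bigr => I _ do rewrite inner.
rewrite big_powerset_supp_le1; last first.
  move=> K K2; rewrite m0 // mulr0 mul0r add0r big1 // => j _.
  by rewrite setUC supp_le1_setU ?mulr0 ?mul0r.
have diag i : i \in U ->
    \sum_(j in U) x [set i] * m ([set i] :|: [set j]) * x [set j] =
    x [set i] * m [set i] * x [set i].
  move=> iU; rewrite (bigD1 i) //= setUid big1 ?addr0 // => j /andP [_ ji].
  by rewrite m0 ?mulr0 ?mul0r // cards2 eq_sym ji.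
rewrite (eq_bigr _ (fun i iU => congr1 (+%R _) (diag i iU))).
under [X in _ + X + _ = _]eq_bigr => j _ do rewrite set0U.
rewrite mulrBl mulr_suml -!addrA [- _ + _]addrC -sumrB -!big_split /=.
congr (_ + _); first by ring.
by apply: eq_bigr => i _; ring.
Qed.

Lemma momentPSD_supp_le1 m U : supp_le1 m ->
  (forall i, i \in U -> 0 <= m [set i]) -> \sum_(i in U) m [set i] <= m set0 ->
  momentPSD m U.
Proof.
move=> m0 m1_ge0 sum_le; split=> [I J _ _ | x]; first by rewrite setUC.
rewrite moment_form_supp_le1 //; apply: addr_ge0.
  by rewrite mulr_ge0 ?sqr_ge0 // subr_ge0.
by apply: sumr_ge0 => i iU; rewrite mulr_ge0 ?sqr_ge0 ?m1_ge0.
Qed.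

Section AffineProduct.

Variables (b : R) (a : 'I_n -> R) (y : {set 'I_n} -> R).
Hypothesis y0 : supp_le1 y.

Lemma gstar_supp_le1 : supp_le1 (gstar b a y).
Proof.
move=> K K2; rewrite /gstar y0 // mulr0 add0r big1 // => j _.
by rewrite setUC supp_le1_setU ?mulr0.
Qed.

Lemma gstar_set0 : gstar b a y set0 = b * y set0 + \sum_j a j * y [set j].
Proof. by rewrite /gstar; under eq_bigr => j _ do rewrite set0U. Qed.

Lemma gstar_set1 i : gstar b a y [set i] = (b + a i) * y [set i].
Proof.
rewrite /gstar (bigD1 i) //= setUid big1 ?addr0 ?mulrDl // => j ji.
by rewrite y0 ?mulr0 // cards2 eq_sym ji.
Qed.

End AffineProduct.

Definition le1_vector (v0 v1 : R) : {set 'I_n} -> R :=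
  fun I => if I == set0 then v0 else if #|I| == 1%N then v1 else 0.

Lemma le1_vector_supp v0 v1 : supp_le1 (le1_vector v0 v1).
Proof.
move=> K K2; rewrite /le1_vector -cards_eq0 !ifN_eq //.
  by rewrite gtn_eqF.
by rewrite -lt0n (leq_trans _ K2).
Qed.

Lemma le1_vector_set0 v0 v1 : le1_vector v0 v1 set0 = v0.
Proof. by rewrite /le1_vector eqxx. Qed.

Lemma le1_vector_set1 v0 v1 i : le1_vector v0 v1 [set i] = v1.
Proof. by rewrite /le1_vector -cards_eq0 cards1. Qed.

Lemma le1_vector_ge0_le1 v1 I : 0 <= v1 <= 1 -> 0 <= le1_vector 1 v1 I <= 1.
Proof.
move=> v1_01; rewrite /le1_vector.
by case: ifP => _; [rewrite ler01 lexx | case: ifP => _; rewrite ?lexx ?ler01].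
Qed.

End SupportAtMostOne.

Lemma knapsack_alpha_bounds (R : realFieldType) (n t : nat) (eps : R) :
  (0 < t < n)%N -> 0 < eps -> eps <= 1 / 2 ->
  let C := 2 * (1 - eps) in
  let alpha := C / (n%:R + (t%:R - 1) * (1 - eps)) in
  [/\ 0 <= alpha, t%:R * alpha <= 1
    & t.-1%:R * ((C - 1) * alpha) <= C - n%:R * alpha].
Proof.
case/andP=> t0 tn eps0 eps_half C alpha.
have t1 : 1 <= t%:R :> R by rewrite ler1n.
have tn1 : t%:R + 1 <= n%:R :> R by rewrite natr1 ler_nat.
have D0 : 0 < n%:R + (t%:R - 1) * (1 - eps) :> R by nra.
have alphaD : alpha * (n%:R + (t%:R - 1) * (1 - eps)) = C by rewrite divfK ?gt_eqF.
have alpha0 : 0 <= alpha by rewrite divr_ge0 ?ltW // /C; lra.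
have -> : t.-1%:R = t%:R - 1 :> R by rewrite -{2}(prednK t0) -natr1 addrK.
clearbody alpha; rewrite /C in alphaD *; split=> //.
  nra.
have : 0 <= (t%:R - 1) * alpha * eps by rewrite !mulr_ge0 ?subr_ge0 // ltW.
nra.
Qed.

Theorem mainTheorem2 (R : realFieldType) (n t : nat) (eps : R) :
  (2 <= n)%N -> (1 <= t <= n.-1)%N -> 0 < eps -> eps <= 1 / 2 ->
  let C : R := 2 * (1 - eps) in
  let alpha : R := C / (n%:R + (t%:R - 1) * (1 - eps)) in
  let y : {set 'I_n} -> R :=
    fun I => if I == set0 then 1 else if #|I| == 1%N then alpha else 0 in
  SA t C (fun _ => -1) y /\
  \sum_(i : 'I_n) y [set i] = n%:R * alpha /\
  ((exists S : {set 'I_n}, #|S|%:R <= C /\ #|S| = 1%N) /\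
   (forall S : {set 'I_n}, #|S|%:R <= C -> (#|S| <= 1)%N)).
Proof.
move=> n2 /andP [t1 tn] eps0 eps_half C alpha y.
have t_lt_n : (0 < t < n)%N by rewrite t1 -(prednK (ltnW n2)) ltnS.
have [alpha0 t_alpha gap] := knapsack_alpha_bounds t_lt_n eps0 eps_half.
rewrite -/C -/alpha in alpha0 t_alpha gap.
have [C1 C2] : 1 <= C /\ C < 2 by rewrite /C; split; lra.
have gstar1_ge0 : 0 <= (C - 1) * alpha by rewrite mulr_ge0 // subr_ge0.
have -> : y = le1_vector 1 alpha by [].
have y_supp := le1_vector_supp (n := n) 1 alpha.
split; [split | split; [|split]].
- move=> I _; apply: le1_vector_ge0_le1.
  by rewrite alpha0 (le_trans _ t_alpha) // ler_peMl // ler1n.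
- exact: le1_vector_set0.
- move=> U Ut; apply: momentPSD_supp_le1 => // [i _|]; first by rewrite le1_vector_set1.
  under eq_bigr do rewrite le1_vector_set1.
  rewrite sumr_const -mulr_natl le1_vector_set0 (le_trans _ t_alpha) //.
  by rewrite ler_wpM2r // ler_nat.
- move=> W Wt; apply: momentPSD_supp_le1 => [|i _|].
  + exact: gstar_supp_le1.
  + by rewrite gstar_set1 // le1_vector_set1.
  under eq_bigr do rewrite gstar_set1 // le1_vector_set1.
  rewrite gstar_set0 le1_vector_set0 mulr1 sumr_const -mulr_natl.
  under [X in _ <= _ + X]eq_bigr do rewrite mulN1r le1_vector_set1.
  rewrite sumr_const card_ord mulNrn -[alpha *+ n]mulr_natl (le_trans _ gap) //.
  by rewrite ler_wpM2r // ler_nat.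
- by under eq_bigr do rewrite le1_vector_set1; rewrite sumr_const card_ord mulr_natl.
- by exists [set Ordinal (ltnW n2)]; rewrite cards1.
- by move=> S /le_lt_trans /(_ C2); rewrite ltr_nat ltnS.
Qed.
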